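(* Let $(X,u)$ and $(Y,v)$ be Čech closure spaces, let $Y^X$ be the set of all continuous maps $(X,u)\to(Y,v)$, and let $\sigma$ be a Čech closure operator on $Y^X$. Call a topological space $Z$ ''test'' if $Z$ is either a $T_1$-space having at most one non-isolated point or the Sierpinski space. Then: (1) $\sigma$ is proper if and only if for every test space $Z$ and every continuous $g:Z\times(X,u)\to(Y,v)$, the map $g^*:Z\to(Y^X,\sigma)$ is continuous; (2) $\sigma$ is admissible if and only if for every test space $Z$ and every $g:Z\times X\to Y$ with $g^*(Z)\subset Y^X$ such that $g^*:Z\to(Y^X,\sigma)$ is continuous, the map $g:Z\times(X,u)\to(Y,v)$ is continuous.
   Context: A Čech closure space $(X,u)$ is a set $X$ with an operator $u:\mathcal P(X)\to\mathcal P(X)$ satisfying $u(\emptyset)=\emptyset$, $A\subset u(A)$, and $u(A\cup B)=u(A)\cup u(B)$. The interior is $\mathrm{int}_u A=X\setminus u(X\setminus A)$; $U$ is a neighbourhood of $x$ if $x\in\mathrm{int}_uU$. Topological spaces are regarded as closure spaces via their Kuratowski closure. A map $f:(X,u)\to(Y,v)$ is continuous if $f(u(A))\subset v(f(A))$ for all $A$. The product $(Z,w)\times(X,u)$ is $Z\times X$ with the closure operator for which the sets $W\times U$ ($W$ a neighbourhood of $z$, $U$ of $x$) form a neighbourhood base at $(z,x)$. For $g:Z\times X\to Y$, $g^*(z)(x)=g(z,x)$. A closure operator $\sigma$ on $Y^X$ is proper if for every closure space $(Z,w)$, continuity of $g:(Z,w)\times(X,u)\to(Y,v)$ implies continuity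 of $g^*:(Z,w)\to(Y^X,\sigma)$; it is admissible if for every closure space $(Z,w)$ and every $g:Z\times X\to Y$ with $g^*(Z)\subset Y^X$, continuity of $g^*:(Z,w)\to(Y^X,\sigma)$ implies continuity of $g$. The Sierpinski space is $\{0,1\}$ with open sets $\emptyset,\{1\},\{0,1\}$. *)

Definition set (T : Type) := T -> Prop.

Definition image {A B : Type} (f : A -> B) (S : set A) : set B :=
  fun b => exists a, S a /\ f a = b.

(* Čech closure operator (set equalities stated pointwise). *)
Definition is_closure {X : Type} (u : set X -> set X) : Prop :=
  (forall x, ~ u (fun _ => False) x) /\
  (forall A x, A x -> u A x) /\
  (forall A B x, u (fun y => A y \/ B y) x <-> (u A x \/ u B x)).

Definition interior {X : Type} (u : set X -> set X) (A : set X) : set X :=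
  fun x => ~ u (fun y => ~ A y) x.

Definition nbhd {X : Type} (u : set X -> set X) (U : set X) (x : X) : Prop :=
  interior u U x.

Definition continuous {X Y : Type} (u : set X -> set X) (v : set Y -> set Y)
  (f : X -> Y) : Prop :=
  forall A x, u A x -> v (image f A) (f x).

Definition prod_cl {Z X : Type} (w : set Z -> set Z) (u : set X -> set X)
  (A : set (Z * X)) : set (Z * X) :=
  fun p => forall W U, nbhd w W (fst p) -> nbhd u U (snd p) ->
    exists q, A q /\ W (fst q) /\ U (snd q).

Definition CMap {X Y : Type} (u : set X -> set X) (v : set Y -> set Y) : Type :=
  { f : X -> Y | continuous u v f }.

(* g^* : Z -> Y^X, given that each g(z,.) is continuous (g^*(Z) ⊂ Y^X). *)
Definition gstar {Z X Y : Type} (u : set X -> set X) (v : set Y -> set Y)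
  (g : Z * X -> Y) (Hg : forall z, continuous u v (fun x => g (z, x)))
  : Z -> CMap u v :=
  fun z => exist _ (fun x => g (z, x)) (Hg z).

Definition proper_on {X Y : Type} (u : set X -> set X) (v : set Y -> set Y)
  (sigma : set (CMap u v) -> set (CMap u v))
  (Zok : forall Z : Type, (set Z -> set Z) -> Prop) : Prop :=
  forall (Z : Type) (w : set Z -> set Z), Zok Z w ->
  forall (g : Z * X -> Y) (Hg : forall z, continuous u v (fun x => g (z, x))),
    continuous (prod_cl w u) v g -> continuous w sigma (@gstar Z X Y u v g Hg).

Definition admissible_on {X Y : Type} (u : set X -> set X) (v : set Y -> set Y)
  (sigma : set (CMap u v) -> set (CMap u v))
  (Zok : forall Z : Type, (set Z -> set Z) -> Prop) : Prop :=
  forall (Z : Type) (w : set Z -> set Z), Zok Z w ->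
  forall (g : Z * X -> Y) (Hg : forall z, continuous u v (fun x => g (z, x))),
    continuous w sigma (@gstar Z X Y u v g Hg) -> continuous (prod_cl w u) v g.

Definition any_closure_space (Z : Type) (w : set Z -> set Z) : Prop :=
  is_closure w.

Definition proper {X Y : Type} (u : set X -> set X) (v : set Y -> set Y)
  (sigma : set (CMap u v) -> set (CMap u v)) : Prop :=
  proper_on u v sigma any_closure_space.

Definition admissible {X Y : Type} (u : set X -> set X) (v : set Y -> set Y)
  (sigma : set (CMap u v) -> set (CMap u v)) : Prop :=
  admissible_on u v sigma any_closure_space.

Definition is_topology {Z : Type} (op : set Z -> Prop) : Prop :=
  op (fun _ => True) /\ op (fun _ => False) /\
  (forall O1 O2, op O1 -> op O2 -> op (fun z => O1 z /\ O2 z)) /\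
  (forall (F : set (set Z)), (forall O, F O -> op O) ->
     op (fun z => exists O, F O /\ O z)).

Definition kcl {Z : Type} (op : set Z -> Prop) (A : set Z) : set Z :=
  fun z => forall O, op O -> O z -> exists a, A a /\ O a.

Definition T1 {Z : Type} (op : set Z -> Prop) : Prop :=
  forall z z', z <> z' -> exists O, op O /\ O z /\ ~ O z'.

Definition isolated {Z : Type} (op : set Z -> Prop) (z : Z) : Prop :=
  op (fun y => y = z).

Definition at_most_one_nonisolated {Z : Type} (op : set Z -> Prop) : Prop :=
  forall z1 z2, ~ isolated op z1 -> ~ isolated op z2 -> z1 = z2.

(* Sierpinski space {0,1} = bool (1 = true), open sets: empty, {1}, {0,1}. *)
Definition sierpinski_open (O : set bool) : Prop :=
  (forall b, ~ O b) \/ (forall b, O b <-> b = true) \/ (forall b, O b).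

Definition is_sierpinski {Z : Type} (op : set Z -> Prop) : Prop :=
  exists h : Z -> bool,
    (forall z1 z2, h z1 = h z2 -> z1 = z2) /\ (forall b, exists z, h z = b) /\
    (forall O, op O <-> sierpinski_open (image h O)).

Definition test_space (Z : Type) (op : set Z -> Prop) : Prop :=
  is_topology op /\ ((T1 op /\ at_most_one_nonisolated op) \/ is_sierpinski op).

Definition test_closure_space (Z : Type) (w : set Z -> set Z) : Prop :=
  exists op : set Z -> Prop, test_space Z op /\ (forall A z, w A z <-> kcl op A z).

From Stdlib Require Import Classical FunctionalExtensionality PropExtensionality.

(* A point z in the closure of A is always seen by a continuous map phi from
   a test space.  If z lies in the closure of a single a in A, phi is the
   Sierpinski path 1 |-> a, 0 |-> z.  Otherwise adjoin to Z a new point whose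
   neighbourhoods are generated by the traces W /\ A of the neighbourhoods W
   of z: every other point is isolated, points are closed because no {a}
   accumulates at z, and phi sends the new point to z.  For closure points of
   A in Z x X the same works with the Z-projections of A inside the basic
   neighbourhoods W x U.  Pulling g back along phi x id then transfers
   properness and admissibility from test spaces to arbitrary closure spaces. *)

Lemma set_ext {T : Type} (A B : set T) : (forall x, A x <-> B x) -> A = B.
Proof.
  intro H. apply functional_extensionality; intro x.
  apply propositional_extensionality, H.
Qed.

Section ClosureSpace.
Variables (X : Type) (u : set X -> set X).
Hypothesis Hu : is_closure u.

Lemma closure_mono (A B : set X) :
  (forall x, A x -> B x) -> forall x, u A x -> u B x.
Proof.
  destruct Hu as [_ [_ Hunion]]. intros AB x HA.
  replace B with (fun y => A y \/ B y) by (apply set_ext; intuition).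
  apply Hunion. left. exact HA.
Qed.

Lemma nbhd_mem U x : nbhd u U x -> U x.
Proof.
  intro HU. apply NNPP; intro Hn. apply HU. exact (proj1 (proj2 Hu) _ _ Hn).
Qed.

Lemma nbhd_compl A x : ~ u A x -> nbhd u (fun y => ~ A y) x.
Proof.
  intros HA H. apply HA. refine (closure_mono _ _ _ _ H). intros y Hy. now apply NNPP.
Qed.

Lemma nbhd_full x : nbhd u (fun _ => True) x.
Proof.
  intro H. apply (proj1 Hu x). refine (closure_mono _ _ _ _ H). tauto.
Qed.

Lemma nbhd_and U1 U2 x :
  nbhd u U1 x -> nbhd u U2 x -> nbhd u (fun y => U1 y /\ U2 y) x.
Proof.
  intros H1 H2 H.
  apply (closure_mono _ (fun y => ~ U1 y \/ ~ U2 y)) in H.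
  - apply (proj2 (proj2 Hu)) in H. destruct H; [apply H1 | apply H2]; assumption.
  - intros y Hy. apply not_and_or, Hy.
Qed.

Lemma closure_nbhdP A x :
  u A x <-> forall U, nbhd u U x -> exists y, A y /\ U y.
Proof.
  split.
  - intros HA U HU. apply NNPP; intro Hn. apply HU.
    refine (closure_mono _ _ _ _ HA). intros y Hy HUy. apply Hn. now exists y.
  - intro H. apply NNPP; intro HA.
    destruct (H _ (nbhd_compl A x HA)) as [y [Hy Hny]]. exact (Hny Hy).
Qed.

End ClosureSpace.

Lemma continuous_nbhd_preimage {Z Z' : Type} (w : set Z -> set Z)
  (w' : set Z' -> set Z') (phi : Z' -> Z) W p :
  is_closure w -> continuous w' w phi ->
  nbhd w W (phi p) -> nbhd w' (fun q => W (phi q)) p.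
Proof.
  intros Hw Hphi HW H. apply HW. refine (closure_mono _ w Hw _ _ _ _ (Hphi _ _ H)).
  intros y [q [Hq <-]]. exact Hq.
Qed.

Lemma continuous_comp {X Y Z : Type} (u : set X -> set X) (v : set Y -> set Y)
  (w : set Z -> set Z) (f : X -> Y) (g : Y -> Z) :
  is_closure w -> continuous u v f -> continuous v w g ->
  continuous u w (fun x => g (f x)).
Proof.
  intros Hw Hf Hg A x HA. refine (closure_mono _ w Hw _ _ _ _ (Hg _ _ (Hf _ _ HA))).
  intros z [y [[a [Ha <-]] <-]]. now exists a.
Qed.

Lemma prod_map_continuous {Z Z' X : Type} (w : set Z -> set Z)
  (w' : set Z' -> set Z') (u : set X -> set X) (phi : Z' -> Z) :
  is_closure w -> continuous w' w phi ->
  continuous (prod_cl w' u) (prod_cl w u) (fun q => (phi (fst q), snd q)).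
Proof.
  intros Hw Hphi B p Hp W U HW HU.
  destruct (Hp _ U (continuous_nbhd_preimage w w' phi W (fst p) Hw Hphi HW) HU)
    as [q [Hq [HWq HUq]]].
  exists (phi (fst q), snd q). split; [now exists q | split; assumption].
Qed.

Section Kuratowski.
Variables (Z : Type) (op : set Z -> Prop).

Lemma not_kcl_open A z :
  ~ kcl op A z -> exists O, op O /\ O z /\ forall a, O a -> ~ A a.
Proof.
  intro H. apply NNPP; intro Hn. apply H. intros O HO Hz.
  apply NNPP; intro Hm. apply Hn. exists O. repeat split; try assumption.
  intros a Ha HAa. apply Hm. now exists a.
Qed.

Lemma kcl_nbhd O p :
  nbhd (kcl op) O p -> exists O', op O' /\ O' p /\ forall q, O' q -> O q.
Proof.
  intro H. destruct (not_kcl_open _ _ H) as [O' [HO' [Hp Hsub]]].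
  exists O'. repeat split; try assumption.
  intros q Hq. apply NNPP, Hsub, Hq.
Qed.

Lemma kcl_is_closure : is_topology op -> is_closure (kcl op).
Proof.
  intros [Hfull [_ [Hint _]]]. split; [|split].
  - intros z H. now destruct (H _ Hfull I) as [a [[] _]].
  - intros A z Hz O _ HO. now exists z.
  - intros A B z. split.
    + intro H. apply NNPP; intro Hn. apply not_or_and in Hn as [HA HB].
      destruct (not_kcl_open _ _ HA) as [O1 [HO1 [Hz1 H1]]].
      destruct (not_kcl_open _ _ HB) as [O2 [HO2 [Hz2 H2]]].
      destruct (H _ (Hint _ _ HO1 HO2) (conj Hz1 Hz2)) as [a [[Ha|Ha] [Ha1 Ha2]]].
      * exact (H1 a Ha1 Ha).
      * exact (H2 a Ha2 Ha).
    + intros [H|H] O HO Hz; destruct (H O HO Hz) as [a [Ha HOa]]; exists a; auto.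
Qed.

End Kuratowski.

Lemma test_closure_is_closure Z (w : set Z -> set Z) :
  test_closure_space Z w -> is_closure w.
Proof.
  intros [op [[Htop _] Hw]].
  replace w with (kcl op).
  - exact (kcl_is_closure Z op Htop).
  - apply functional_extensionality; intro A. apply set_ext. intro z. now rewrite Hw.
Qed.

Lemma image_id {T : Type} (A : set T) : image (fun x => x) A = A.
Proof.
  apply set_ext. intro x. split; [intros [y [Hy <-]]; exact Hy | intro Hx; now exists x].
Qed.

Lemma sierpinski_openE (O : set bool) : sierpinski_open O <-> (O false -> O true).
Proof.
  split.
  - intros [H|[H|H]] Hf.
    + now destruct (H false).
    + now apply H.
    + apply H.
  - intro H. destruct (classic (O false)) as [Hf|Hf].
    + right; right. intros []; auto.
    + destruct (classic (O true)) as [Ht|Ht].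
      * right; left. intros []; intuition discriminate.
      * left. intros []; assumption.
Qed.

Lemma sierpinski_test : test_closure_space bool (kcl sierpinski_open).
Proof.
  exists sierpinski_open. split; [split | tauto].
  - repeat split.
    + apply sierpinski_openE. tauto.
    + apply sierpinski_openE. tauto.
    + intros O1 O2. rewrite !sierpinski_openE. tauto.
    + intros F HF. apply sierpinski_openE. intros [O [HO Hf]].
      exists O. split; [exact HO | exact (proj1 (sierpinski_openE O) (HF O HO) Hf)].
  - right. exists (fun b => b). split; [|split]; [eauto | eauto |].
    intro O. now rewrite image_id.
Qed.

Lemma sierpinski_nbhd_false (O : set bool) :
  nbhd (kcl sierpinski_open) O false -> O true.
Proof.
  intro H. destruct (kcl_nbhd _ _ _ _ H) as [O' [HO' [Hf Hsub]]].
  apply Hsub, (proj1 (sierpinski_openE O') HO' Hf).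
Qed.

Lemma sierpinski_path_continuous {Z : Type} (w : set Z -> set Z) (a z : Z) :
  is_closure w -> w (fun y => y = a) z ->
  continuous (kcl sierpinski_open) w (fun b : bool => if b then a else z).
Proof.
  intros Hw Ha B b Hb. destruct b.
  - destruct (Hb (fun b => b = true)) as [c [Hc ->]];
      [apply sierpinski_openE; discriminate | reflexivity |].
    apply (proj1 (proj2 Hw)). now exists true.
  - destruct (Hb (fun _ => True)) as [[] [Hc _]];
      [apply sierpinski_openE; tauto | exact I | |].
    + refine (closure_mono _ w Hw _ _ _ _ Ha). intros y ->. now exists true.
    + apply (proj1 (proj2 Hw)). now exists false.
Qed.

Definition is_filter {Z : Type} (F : set Z -> Prop) : Prop :=
  F (fun _ => True) /\
  (forall S1 S2, F S1 -> F S2 -> F (fun a => S1 a /\ S2 a)) /\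
  (forall S S', F S -> (forall a, S a -> S' a) -> F S').

Definition odefault {Z : Type} (z : Z) (q : option Z) : Z :=
  match q with Some a => a | None => z end.

Section AdjoinPoint.
Variables (Z : Type) (F : set Z -> Prop).

Definition adjoin_point_open (O : set (option Z)) : Prop :=
  O None -> F (fun a => O (Some a)).

Lemma adjoin_point_topology : is_filter F -> is_topology adjoin_point_open.
Proof.
  intros [Hfull [Hand Hup]]. repeat split.
  - intros _. exact Hfull.
  - intros [].
  - intros O1 O2 H1 H2 [HN1 HN2]. exact (Hand _ _ (H1 HN1) (H2 HN2)).
  - intros Fam HFam [O [HO HN]]. apply (Hup _ _ (HFam O HO HN)).
    intros a Ha. now exists O.
Qed.

Lemma adjoin_point_test :
  is_filter F -> (forall a, F (fun b => b <> a)) ->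
  test_closure_space (option Z) (kcl adjoin_point_open).
Proof.
  intros HF Hco. exists adjoin_point_open.
  split; [split; [exact (adjoin_point_topology HF) | left; split] | tauto].
  - intros [a|] q Hne.
    + exists (fun r => r = Some a). repeat split; [discriminate | congruence].
    + destruct q as [b|]; [|congruence].
      exists (fun r => match r with None => True | Some c => c <> b end).
      repeat split; [intros _; exact (Hco b) | tauto].
  - intros [a|] [b|] Ha Hb; try reflexivity; exfalso;
      [apply Ha | apply Ha | apply Hb]; discriminate.
Qed.

Lemma adjoin_point_continuous (w : set Z -> set Z) (z : Z) :
  is_closure w -> (forall W, nbhd w W z -> F W) ->
  continuous (kcl adjoin_point_open) w (odefault z).
Proof.
  intros Hw HF B [a|] Hq.
  - destruct (Hq (fun r => r = Some a)) as [c [Hc ->]];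
      [discriminate | reflexivity |].
    apply (proj1 (proj2 Hw)). now exists (Some a).
  - apply closure_nbhdP; [exact Hw|]. intros W HW.
    destruct (Hq (fun r => match r with None => True | Some a => W a end))
      as [c [Hc HWc]]; [intros _; exact (HF W HW) | exact I |].
    exists (odefault z c). split; [now exists c|].
    destruct c as [a|]; [exact HWc | exact (nbhd_mem _ w Hw W z HW)].
Qed.

End AdjoinPoint.

Definition test_detects {Z X : Type} (w : set Z -> set Z) (u : set X -> set X)
  (A : set (Z * X)) (z : Z) (x : X) : Prop :=
  exists (Z' : Type) (w' : set Z' -> set Z') (phi : Z' -> Z) (p : Z') (B : set (Z' * X)),
    test_closure_space Z' w' /\ continuous w' w phi /\ phi p = z /\
    prod_cl w' u B (p, x) /\ (forall q, B q -> A (phi (fst q), snd q)).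

Definition proj_filter {Z X : Type} (w : set Z -> set Z) (u : set X -> set X)
  (A : set (Z * X)) (z : Z) (x : X) (S : set Z) : Prop :=
  exists W U, nbhd w W z /\ nbhd u U x /\
    forall a y, W a -> U y -> A (a, y) -> S a.

Section Detection.
Variables (Z X : Type) (w : set Z -> set Z) (u : set X -> set X).
Hypotheses (Hw : is_closure w) (Hu : is_closure u).
Variables (A : set (Z * X)) (z : Z) (x : X).

Lemma proj_filter_is_filter : is_filter (proj_filter w u A z x).
Proof.
  repeat split.
  - exists (fun _ => True), (fun _ => True).
    repeat split; apply nbhd_full; assumption.
  - intros S1 S2 [W1 [U1 [HW1 [HU1 H1]]]] [W2 [U2 [HW2 [HU2 H2]]]].
    exists (fun a => W1 a /\ W2 a), (fun y => U1 y /\ U2 y).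
    split; [apply nbhd_and; assumption|]. split; [apply nbhd_and; assumption|].
    intros a y [] []; eauto.
  - intros S S' [W [U [HW [HU H]]]] HS. exists W, U. eauto 6.
Qed.

Lemma sierpinski_detects a :
  w (fun y => y = a) z -> u (fun y => A (a, y)) x -> test_detects w u A z x.
Proof.
  intros Ha Hx.
  exists bool, (kcl sierpinski_open), (fun b : bool => if b then a else z), false,
    (fun q => fst q = true /\ A (a, snd q)).
  repeat split.
  - exact sierpinski_test.
  - exact (sierpinski_path_continuous w a z Hw Ha).
  - intros O U HO HU.
    destruct (proj1 (closure_nbhdP _ u Hu _ x) Hx U HU) as [y [HAy HUy]].
    exists (true, y). repeat split; [exact HAy | exact (sierpinski_nbhd_false O HO) | exact HUy].
  - intros [b y] [Hb HAy]. simpl in *. now subst b.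
Qed.

(* Failing the Sierpinski case, every point [a] avoids some basic
   neighbourhood, which is what makes the one-point space T1. *)
Lemma adjoin_point_detects :
  prod_cl w u A (z, x) ->
  (forall a, ~ (w (fun y => y = a) z /\ u (fun y => A (a, y)) x)) ->
  test_detects w u A z x.
Proof.
  intros Hzx Hn.
  exists (option Z), (kcl (adjoin_point_open Z (proj_filter w u A z x))), (odefault z), None,
    (fun q => match fst q with Some a => A (a, snd q) | None => False end).
  repeat split.
  - apply adjoin_point_test; [exact proj_filter_is_filter|]. intro a.
    destruct (not_and_or _ _ (Hn a)) as [Ha|Ha].
    + exists (fun b => b <> a), (fun _ => True).
      repeat split; [|apply nbhd_full; exact Hu|]; [|tauto].
      refine (nbhd_compl _ w Hw _ _ Ha).
    + exists (fun _ => True), (fun y => ~ A (a, y)).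
      repeat split; [apply nbhd_full; exact Hw | exact (nbhd_compl _ u Hu _ _ Ha) |].
      intros b y _ Hy HA ->. exact (Hy HA).
  - apply adjoin_point_continuous; [exact Hw|]. intros W HW.
    exists W, (fun _ => True). repeat split; [exact HW | apply nbhd_full; exact Hu | tauto].
  - intros O U HO HU. destruct (kcl_nbhd _ _ _ _ HO) as [O' [HO' [HN Hsub]]].
    destruct (HO' HN) as [W [U' [HW [HU' HA]]]].
    destruct (Hzx W _ HW (nbhd_and _ u Hu _ _ x HU HU')) as [[a y] [HAay [HWa [HUy HU'y]]]].
    exists (Some a, y). repeat split; [exact HAay | apply Hsub, (HA a y); assumption | exact HUy].
  - intros [[a|] y]; simpl; tauto.
Qed.

Lemma test_detects_prod_cl : prod_cl w u A (z, x) -> test_detects w u A z x.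
Proof.
  intro Hzx.
  destruct (classic (exists a, w (fun y => y = a) z /\ u (fun y => A (a, y)) x))
    as [[a [Ha Hx]]|Hn].
  - exact (sierpinski_detects a Ha Hx).
  - apply adjoin_point_detects; [exact Hzx|]. intros a Ha. apply Hn. now exists a.
Qed.

End Detection.

Definition identity_closure {T : Type} (A : set T) : set T := A.

Lemma identity_closure_is_closure (T : Type) : is_closure (@identity_closure T).
Proof. unfold identity_closure. repeat split; tauto. Qed.

(* [(Z, w)] is [(Z, w) x 1], so the product case applies. *)
Lemma test_detects_closure {Z : Type} (w : set Z -> set Z) (A : set Z) (z : Z) :
  is_closure w -> w A z ->
  exists (Z' : Type) (w' : set Z' -> set Z') (phi : Z' -> Z) (p : Z') (B : set Z'),
    test_closure_space Z' w' /\ continuous w' w phi /\ phi p = z /\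
    w' B p /\ (forall b, B b -> A (phi b)).
Proof.
  intros Hw Hz.
  assert (Hunit := identity_closure_is_closure unit).
  destruct (test_detects_prod_cl Z unit w identity_closure Hw Hunit
              (fun q => A (fst q)) z tt) as (Z' & w' & phi & p & B & Ht & Hphi & Hp & HB & HBA).
  - intros W U HW HU.
    destruct (proj1 (closure_nbhdP _ w Hw A z) Hz W HW) as [a [Ha HWa]].
    exists (a, tt). repeat split; [exact Ha | exact HWa | exact (nbhd_mem _ _ Hunit U tt HU)].
  - exists Z', w', phi, p, (fun b => B (b, tt)). repeat split; try assumption.
    + apply (closure_nbhdP _ w' (test_closure_is_closure Z' w' Ht)). intros W HW.
      destruct (HB W _ HW (nbhd_full _ _ Hunit tt)) as [[b []] [Hb [HWb _]]].
      now exists b.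
    + intros b Hb. exact (HBA _ Hb).
Qed.

Lemma proper_of_proper_on_test {X Y : Type} (u : set X -> set X) (v : set Y -> set Y)
  (sigma : set (CMap u v) -> set (CMap u v)) :
  is_closure v -> is_closure sigma ->
  proper_on u v sigma test_closure_space -> proper u v sigma.
Proof.
  intros Hv Hs Hp Z w Hw g Hg Hgc A z Hz.
  destruct (test_detects_closure w A z Hw Hz)
    as (Z' & w' & phi & p & B & Ht & Hphi & <- & HB & HBA).
  assert (Hg'c : continuous (prod_cl w' u) v (fun q => g (phi (fst q), snd q)))
    by exact (continuous_comp _ _ _ _ g Hv (prod_map_continuous w w' u phi Hw Hphi) Hgc).
  refine (closure_mono _ sigma Hs _ _ _ _ (Hp Z' w' Ht _ (fun q => Hg (phi q)) Hg'c B p HB)).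
  intros f [b [Hb <-]]. exists (phi b). split; [exact (HBA b Hb) | reflexivity].
Qed.

Lemma admissible_of_admissible_on_test {X Y : Type} (u : set X -> set X)
  (v : set Y -> set Y) (sigma : set (CMap u v) -> set (CMap u v)) :
  is_closure u -> is_closure v -> is_closure sigma ->
  admissible_on u v sigma test_closure_space -> admissible u v sigma.
Proof.
  intros Hu Hv Hs Ha Z w Hw g Hg Hgs A [z x] Hzx.
  destruct (test_detects_prod_cl Z X w u Hw Hu A z x Hzx)
    as (Z' & w' & phi & p & B & Ht & Hphi & <- & HB & HBA).
  assert (Hg's : continuous w' sigma
                   (gstar u v (fun q => g (phi (fst q), snd q)) (fun q => Hg (phi q))))
    by exact (continuous_comp _ _ _ phi (gstar u v g Hg) Hs Hphi Hgs).
  refine (closure_mono _ v Hv _ _ _ _ (Ha Z' w' Ht _ _ Hg's B (p, x) HB)).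
  intros y [q [Hq <-]]. exists (phi (fst q), snd q). split; [exact (HBA q Hq) | reflexivity].
Qed.

Theorem theorem6 (X Y : Type) (u : set X -> set X) (v : set Y -> set Y)
  (sigma : set (CMap u v) -> set (CMap u v)) :
  is_closure u -> is_closure v -> is_closure sigma ->
  (proper u v sigma <-> proper_on u v sigma test_closure_space) /\
  (admissible u v sigma <-> admissible_on u v sigma test_closure_space).
Proof.
  intros Hu Hv Hs. split; split.
  - intros Hp Z w Ht. exact (Hp Z w (test_closure_is_closure Z w Ht)).
  - exact (proper_of_proper_on_test u v sigma Hv Hs).
  - intros Ha Z w Ht. exact (Ha Z w (test_closure_is_closure Z w Ht)).
  - exact (admissible_of_admissible_on_test u v sigma Hu Hv Hs).
Qed.
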